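(* Let $\mathbf A=(A_{i,j})_{p\times p}$, $\mathbf Y=(Y_{i,j})_{p\times p}$, $k\ge2$, $\tau_1,\dots,\tau_k\in\{0,1\}$, $\mathcal V$, $C_{\mathcal V}$, $\varphi_\ell$ and $\aleph_{\mathcal V}$ be as in the context, with $\alpha,\beta$ known, and define \[ \widetilde C_{\mathcal V}=\frac{1}{(1-\alpha-\beta)^k}\cdot\frac{1}{|\mathcal V|}\sum_{\mathbf v=(i_1,i_1',\dots,i_k,i_k')\in\mathcal V}\prod_{\ell=1}^k\varphi_\ell(Y_{i_\ell,i_\ell'}). \] If $|1-\alpha-\beta|\ge c$ for some positive constant $c$, then as $p\to\infty$, \[ |\widetilde C_{\mathcal V}-C_{\mathcal V}|=O_p\Big(\sqrt{\aleph_{\mathcal V}/|\mathcal V|}\Big). \]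
   Context: $\mathbf A$ is a deterministic (unknown) symmetric $\{0,1\}$-valued $p\times p$ matrix with zero diagonal (adjacency matrix of a simple undirected graph on $\{1,\dots,p\}$). $\mathbf Y$ is symmetric with zero diagonal and $Y_{i,j}=A_{i,j}I(\varepsilon_{i,j}=0)+I(\varepsilon_{i,j}=1)$ for $i\neq j$, where $\varepsilon_{i,j}=\varepsilon_{j,i}$, $\mathbb P(\varepsilon_{i,j}=1)=\alpha$, $\mathbb P(\varepsilon_{i,j}=0)=1-\alpha-\beta$, $\mathbb P(\varepsilon_{i,j}=-1)=\beta$ for all $i<j$, and $\{\varepsilon_{i,j}\}_{i<j}$ are independent. $\mathcal V$ is a nonempty set of tuples $(i_1,i_1',\dots,i_k,i_k')\in\{1,\dots,p\}^{2k}$ such that $i_\ell\ne i_\ell'$ for each $\ell$ and $|\{i_{\ell_1},i_{\ell_1}'\}\cap\{i_{\ell_2},i_{\ell_2}'\}|\le1$ for all $\ell_1\ne\ell_2$ (possibly with further restrictions, e.g. encoding a subgraph). The subgraph density is $C_{\mathcal V}=\frac{1}{|\mathcal V|}\sum_{\mathbf v\in\mathcal V}\prod_{\ell=1}^kA_{i_\ell,i_\ell'}^{\tau_\ell}(1-A_{i_\ell,i_\ell'})^{1-\tau_\ell}$ with the convention $0^0=1$. $\varphi_\ell(x)=(x-\alpha)^{\tau_\ell}(1-\beta-x)^{1-\tau_\ell}$. For $\mathbf v\in\mathcal V$ and $1\le\ell_1<\dots<\ell_s\le k$ ($1\le s\le k-1$), $\mathcal G_{\ell_1,\dots,\ell_s}(\mathbf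 v)$ is the set of $(\theta_1,\theta_1',\dots,\theta_s,\theta_s')$ such that the tuple obtained from $\mathbf v$ by replacing the pair $(i_{\ell_r},i_{\ell_r}')$ by $(\theta_r,\theta_r')$ for each $r=1,\dots,s$ lies in $\mathcal V$. $\aleph_{\mathcal V}(s)=\max_{\mathbf v\in\mathcal V}\max_{1\le\ell_1<\dots<\ell_s\le k}|\mathcal G_{\ell_1,\dots,\ell_s}(\mathbf v)|$ and $\aleph_{\mathcal V}=\max_{1\le s\le k-1}\aleph_{\mathcal V}(s)$. Asymptotics are as $p\to\infty$ with $\mathbf A$, $\mathcal V$ (and possibly $\alpha,\beta$) depending on $p$, while $k$ and $\tau_1,\dots,\tau_k$ are fixed. *)

From HB Require Import structures.
From mathcomp Require Import all_boot all_order all_algebra.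
From mathcomp Require Import reals.
Set Implicit Arguments. Unset Strict Implicit. Unset Printing Implicit Defensive.
Import Order.TTheory GRing.Theory Num.Theory.
Local Open Scope ring_scope.

(* Unordered pairs {i,j} with i < j, indexing the independent noises eps_{i,j}. *)
Definition upair (p : nat) := {x : 'I_p * 'I_p | (x.1 < x.2)%N}.

Definition eps_val (e : 'I_3) : int :=
  match nat_of_ord e with 0%N => 0%Z | 1%N => 1%Z | _ => (-1)%Z end.

Definition noise (p : nat) := {ffun upair p -> 'I_3}.

Section Model.
Variables (R : realType) (p : nat).

Definition eps_weight (alpha beta : R) (e : 'I_3) : R :=
  if eps_val e == 1%Z then alpha
  else if eps_val e == 0%Z then 1 - alpha - beta else beta.

Definition Prob (alpha beta : R) (E : pred (noise p)) : R :=
  \sum_(w : noise p | E w) \prod_(e : upair p) eps_weight alpha beta (w e).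

(* eps_{i,j} = eps_{j,i} (value for i = j is irrelevant, diagonal of Y is 0). *)
Definition eps_of (w : noise p) (i j : 'I_p) : 'I_3 :=
  match insub (i, j) : option (upair p) with
  | Some u => w u
  | None => match insub (j, i) : option (upair p) with
            | Some u => w u
            | None => ord0
            end
  end.

Definition Aval (A : 'I_p -> 'I_p -> bool) (i j : 'I_p) : R := (A i j : nat)%:R.

Definition Yval (A : 'I_p -> 'I_p -> bool) (w : noise p) (i j : 'I_p) : R :=
  if i == j then 0
  else Aval A i j * (eps_val (eps_of w i j) == 0%Z)%:R
       + (eps_val (eps_of w i j) == 1%Z)%:R.

Variable k : nat.
(* A tuple (i_1,i_1',...,i_k,i_k') is encoded as v : 'I_k -> 'I_p * 'I_p,
   with v l = (i_l, i_l'). *)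
Definition tup := {ffun 'I_k -> 'I_p * 'I_p}.

Definition admissible (V : {set tup}) : Prop :=
  V != set0 /\
  forall v, v \in V ->
    (forall l, (v l).1 != (v l).2) /\
    (forall l1 l2, l1 != l2 ->
       (#|[set (v l1).1; (v l1).2] :&: [set (v l2).1; (v l2).2]| <= 1)%N).

Definition C_V (tau : 'I_k -> bool) (A : 'I_p -> 'I_p -> bool) (V : {set tup}) : R :=
  (#|V|%:R)^-1 * \sum_(v in V) \prod_(l < k)
     (Aval A (v l).1 (v l).2 ^+ tau l * (1 - Aval A (v l).1 (v l).2) ^+ (1 - tau l)).

Definition phi (tau : 'I_k -> bool) (alpha beta : R) (l : 'I_k) (x : R) : R :=
  (x - alpha) ^+ tau l * (1 - beta - x) ^+ (1 - tau l).

Definition Ctilde (tau : 'I_k -> bool) (alpha beta : R) (A : 'I_p -> 'I_p -> bool)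
    (V : {set tup}) (w : noise p) : R :=
  ((1 - alpha - beta) ^+ k)^-1 * ((#|V|%:R)^-1 *
   \sum_(v in V) \prod_(l < k) phi tau alpha beta l (Yval A w (v l).1 (v l).2)).

End Model.

Definition replace (p k s : nat) (v : tup p k) (ell : {ffun 'I_s -> 'I_k})
    (theta : {ffun 'I_s -> 'I_p * 'I_p}) : tup p k :=
  [ffun j => if [pick r | ell r == j] is Some r then theta r else v j].

Definition strictly_increasing (s k : nat) (ell : {ffun 'I_s -> 'I_k}) : bool :=
  [forall r1 : 'I_s, forall r2 : 'I_s, (r1 < r2)%N ==> (ell r1 < ell r2)%N].

Definition Gset (p k s : nat) (V : {set tup p k}) (v : tup p k)
    (ell : {ffun 'I_s -> 'I_k}) : {set {ffun 'I_s -> 'I_p * 'I_p}} :=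
  [set theta | replace v ell theta \in V].

Definition aleph_s (p k : nat) (V : {set tup p k}) (s : nat) : nat :=
  \max_(v in V) \max_(ell : {ffun 'I_s -> 'I_k} | strictly_increasing ell)
     #|Gset V v ell|.

Definition aleph (p k : nat) (V : {set tup p k}) : nat :=
  \max_(1 <= s < k) aleph_s V s.

From mathcomp Require Import all_boot all_order all_algebra.
From mathcomp Require Import reals zify ring lra.
Import Order.TTheory GRing.Theory Num.Theory.
Local Open Scope ring_scope.
Set Implicit Arguments. Unset Strict Implicit. Unset Printing Implicit Defensive.

(* Write Ctilde - C_V as ((1-alpha-beta)^k |V|)^-1 times the centred sum of
   T_v = prod_l phi_l(Y_(i_l,i_l')) over v in V.  The k pairs of an admissible
   tuple are k distinct edges, so T_v is a product of functions of independent
   noises, and E phi_l(Y_e) = (1-alpha-beta) A_e^tau_l (1-A_e)^(1-tau_l): the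
   estimator is unbiased.  For the same reason T_v and T_v' are uncorrelated
   unless v and v' share an edge, and |T_v| <= 1, so the variance of the sum is
   at most twice the number of pairs (v, v') sharing an edge.  A tuple whose
   l-th pair is prescribed is determined by its other k-1 pairs, which form an
   element of some G_(l_1,...,l_(k-1))(u); hence every v shares an edge with at
   most 2 k^2 aleph_V tuples, the variance is at most 4 k^2 aleph_V |V|, and
   Chebyshev's inequality with (1-alpha-beta)^k >= c^k gives the rate. *)

Section ProductLaw.
Variables (R : realFieldType) (I J : finType) (q : J -> R).
Hypotheses (q_ge0 : forall j, 0 <= q j) (sum_q : \sum_j q j = 1).

Definition mass (w : {ffun I -> J}) : R := \prod_i q (w i).

Definition expect (f : {ffun I -> J} -> R) : R := \sum_w mass w * f w.

Lemma mass_ge0 w : 0 <= mass w.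
Proof. by apply: prodr_ge0 => i _; apply: q_ge0. Qed.

Lemma expect_prod_coord (G : I -> J -> R) :
  expect (fun w => \prod_i G i (w i)) = \prod_i \sum_j q j * G i j.
Proof.
rewrite bigA_distr_bigA /=; apply: eq_bigr => w _.
by rewrite /mass -big_split.
Qed.

Lemma sum_mass : \sum_w mass w = 1.
Proof.
rewrite /mass -(bigA_distr_bigA (fun (i : I) j => q j)) /=.
by rewrite big1 // => i _; apply: sum_q.
Qed.

Lemma eq_expect f g : f =1 g -> expect f = expect g.
Proof. by move=> fg; apply: eq_bigr => w _; rewrite fg. Qed.

Lemma expect_sum (L : finType) (P : pred L) (F : L -> {ffun I -> J} -> R) :
  expect (fun w => \sum_(l | P l) F l w) = \sum_(l | P l) expect (F l).
Proof. by rewrite /expect; under eq_bigr do rewrite mulr_sumr; rewrite exchange_big. Qed.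

Lemma expectZ x f : expect (fun w => x * f w) = x * expect f.
Proof. by rewrite /expect mulr_sumr; apply: eq_bigr => w _; rewrite mulrCA. Qed.

Lemma expect_norm_le1 f : (forall w, `|f w| <= 1) -> `|expect f| <= 1.
Proof.
move=> f_le1; apply: le_trans (ler_norm_sum _ _ _) _.
rewrite -sum_mass; apply: ler_sum => w _.
by rewrite normrM ger0_norm ?mass_ge0 // ler_piMr ?mass_ge0.
Qed.

Lemma expect_cov f g x y :
  expect (fun w => (f w - x) * (g w - y)) =
  expect (fun w => f w * g w) - x * expect g - y * expect f + x * y.
Proof.
rewrite /expect -[x * y]mulr1 -sum_mass mulr_sumr !mulr_sumr -!sumrB -big_split /=.
by apply: eq_bigr => w _; ring.
Qed.

Lemma expect_prod (L : finType) (ed : L -> I) (F : L -> J -> R) :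
  injective ed ->
  expect (fun w => \prod_l F l (w (ed l))) = \prod_l \sum_j q j * F l j.
Proof.
move=> ed_inj.
(* Group the factors by coordinate; by injectivity every fibre of [ed] has at
   most one element. *)
rewrite (eq_expect (g := fun w => \prod_i \prod_(l | ed l == i) F l (w i))); last first.
  move=> w; rewrite (partition_big ed predT) //=.
  by apply: eq_bigr => i _; apply: eq_bigr => l /eqP <-.
rewrite (expect_prod_coord (fun i j => \prod_(l | ed l == i) F l j)).
rewrite [RHS](partition_big ed predT) //=.
apply: eq_bigr => i _; case: (pickP (fun l => ed l == i)) => [l /eqP <- | none].
  have one_l l' : (ed l' == ed l) = (l' == l) by apply/eqP/eqP => [/ed_inj|->].
  rewrite (eq_bigl _ _ one_l) big_pred1_eq.
  by apply: eq_bigr => j _; rewrite (eq_bigl _ _ one_l) big_pred1_eq.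
rewrite [RHS]big_pred0 // -[RHS]sum_q; apply: eq_bigr => j _.
by rewrite big_pred0 ?mulr1.
Qed.

Lemma chebyshev (g : {ffun I -> J} -> R) (t : R) : 0 < t ->
  \sum_(w | t < `|g w|) mass w <= expect (fun w => g w ^+ 2) / t ^+ 2.
Proof.
move=> t_gt0; rewrite /expect mulr_suml big_mkcond /=.
apply: ler_sum => w _; rewrite -mulrA.
case: ifP => [t_lt | _]; last exact: mulr_ge0 (mass_ge0 w) (divr_ge0 (sqr_ge0 _) (sqr_ge0 _)).
rewrite ler_peMr ?mass_ge0 // ler_pdivlMr ?exprn_gt0 // mul1r.
by rewrite -(real_normK (num_real (g w))) lerXn2r ?nnegrE // ltW.
Qed.

End ProductLaw.

Arguments eq_expect {R I J q} [f g].

Section CountingTuples.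
Variables (p k : nat) (V : {set tup p k}).

Lemma card_Gset_le_aleph s (v : tup p k) (ell : {ffun 'I_s -> 'I_k}) :
  (0 < s < k)%N -> v \in V -> strictly_increasing ell -> (#|Gset V v ell| <= aleph V)%N.
Proof.
case/andP=> s_gt0 s_ltk vV ell_incr.
apply: leq_trans (_ : aleph_s V s <= _)%N; last first.
  by apply: (leq_bigmax_seq (F := aleph_s V)); rewrite ?mem_index_iota ?s_gt0.
apply: leq_trans (leq_bigmax_cond (F := fun v => \max_(ell | strictly_increasing ell)
                                                #|Gset V v ell|) _ vV).
exact: (leq_bigmax_cond (F := fun ell => #|Gset V v ell|)).
Qed.

Lemma strictly_increasing_lift (l : 'I_k) :
  strictly_increasing [ffun r : 'I_k.-1 => lift l r].
Proof.
apply/forallP => r1; apply/forallP => r2; apply/implyP => r12.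
by rewrite !ffunE /= /bump; case: (leqP l r1); case: (leqP l r2); lia.
Qed.

Lemma sum_pair_at_le_aleph (l : 'I_k) (x : 'I_p * 'I_p) :
  (1 < k)%N -> (\sum_(v in V) (v l == x) <= aleph V)%N.
Proof.
move=> k_gt1; rewrite -big_mkcondr /= sum1_card.
case: (pickP [pred v | (v \in V) && (v l == x)]) => [u /andP[uV /eqP ux] | none];
  last by rewrite eq_card0.
pose ell : {ffun 'I_k.-1 -> 'I_k} := [ffun r => lift l r].
pose drop_l (v : tup p k) : {ffun 'I_k.-1 -> 'I_p * 'I_p} := [ffun r => v (lift l r)].
have replace_drop (v : tup p k) : v l = x -> replace u ell (drop_l v) = v.
  move=> vx; apply/ffunP => j; rewrite /replace !ffunE.
  case: pickP => [r /eqP | not_lifted]; first by rewrite ffunE => <-; rewrite ffunE.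
  case: (unliftP l j) => [r j_r | ->]; last by rewrite ux vx.
  by move: (not_lifted r); rewrite ffunE j_r eqxx.
have drop_inj : {in [pred v | (v \in V) && (v l == x)] &, injective drop_l}.
  move=> v1 v2 /andP[_ /eqP v1x] /andP[_ /eqP v2x] E.
  by rewrite -(replace_drop _ v1x) -(replace_drop _ v2x) E.
rewrite -(card_in_image drop_inj).
apply: leq_trans (card_Gset_le_aleph _ uV (strictly_increasing_lift l)); last first.
  by apply/andP; split; lia.
apply: subset_leq_card; apply/subsetP => _ /imageP[v /andP[vV /eqP vx] ->].
by rewrite inE replace_drop.
Qed.

Lemma aleph_ge1 : V != set0 -> (1 < k)%N -> (1 <= aleph V)%N.
Proof.
case/set0Pn => v vV k_gt1; pose l0 : 'I_k := Ordinal (ltnW k_gt1).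
apply: leq_trans (sum_pair_at_le_aleph l0 (v l0) k_gt1).
by rewrite (bigD1 v) //= eqxx.
Qed.

End CountingTuples.

Section Sharing.
Variables (p k : nat) (V : {set tup p k}).

Definition pair_swap (x : 'I_p * 'I_p) := (x.2, x.1).

Lemma pair_swapK : involutive pair_swap.
Proof. by case. Qed.

Definition share (v v' : tup p k) : bool :=
  [exists l, exists l', (v' l' == v l) || (v' l' == pair_swap (v l))].

Lemma share_le_sum (v v' : tup p k) :
  (share v v' <= \sum_l \sum_l' ((v' l' == v l) + (v' l' == pair_swap (v l))))%N.
Proof.
rewrite /share; case: existsP => [[l /existsP[l' hit]] | _] //.
rewrite (bigD1 l) //= (bigD1 l') //= -addnA.
by case/orP: hit => ->; rewrite ?addn1 ?ltn_addr.
Qed.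

Lemma sum_share_le (v : tup p k) :
  (1 < k)%N -> (\sum_(v' in V) share v v' <= 2 * k ^ 2 * aleph V)%N.
Proof.
move=> k_gt1.
apply: leq_trans (_ : _ <= \sum_(v' in V) \sum_l \sum_l'
    ((v' l' == v l) + (v' l' == pair_swap (v l))))%N _.
  by apply: leq_sum => v' _; apply: share_le_sum.
rewrite exchange_big /=; under eq_bigr do rewrite exchange_big /=.
apply: leq_trans (_ : \sum_(l < k) \sum_(l' < k) (aleph V + aleph V) <= _)%N.
  apply: leq_sum => l _; apply: leq_sum => l' _.
  by rewrite big_split /= leq_add ?sum_pair_at_le_aleph.
by rewrite !sum_nat_const !card_ord; lia.
Qed.

End Sharing.

Section Edges.
Variable p : nat.

Definition edge (i j : 'I_p) : option (upair p) :=
  if insub (i, j) is Some u then Some u else insub (j, i).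

Lemma eps_of_edge w i j u : edge i j = Some u -> eps_of w i j = w u.
Proof.
rewrite /eps_of /edge; case: (insub (i, j)) => [u' [->] //|].
by case: (insub (j, i)) => [u' [->]|].
Qed.

Lemma edge_exists (i j : 'I_p) : i != j -> exists u, edge i j = Some u.
Proof.
move=> ij; rewrite /edge.
case: insubP => [u _ _ | ji]; first by exists u.
case: insubP => [u _ _ | ij']; first by exists u.
by move: ij ji ij'; rewrite -val_eqE /= -!leqNgt; lia.
Qed.

Lemma edge_val (x : 'I_p * 'I_p) u :
  edge x.1 x.2 = Some u -> (val u == x) || (val u == pair_swap x).
Proof.
case: x => i j; rewrite /edge /=.
case: insubP => [u' _ u'_ij [<-] | _]; first by rewrite u'_ij eqxx.
by case: insubP => [u' _ u'_ji [<-] | _ //]; rewrite u'_ji eqxx orbT.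
Qed.

Lemma edge_inj (x y : 'I_p * 'I_p) u :
  edge x.1 x.2 = Some u -> edge y.1 y.2 = Some u -> (y == x) || (y == pair_swap x).
Proof.
move=> /edge_val/orP[]/eqP ux /edge_val/orP[]/eqP uy.
- by rewrite -ux -uy eqxx.
- by rewrite -[y]pair_swapK -uy ux eqxx orbT.
- by rewrite -uy ux eqxx orbT.
- by rewrite -[y]pair_swapK -uy ux pair_swapK eqxx.
Qed.

End Edges.

Lemma edge_map_exists (p k : nat) (v : tup p k) :
  (forall l, (v l).1 != (v l).2) ->
  (forall l1 l2, l1 != l2 ->
     (#|[set (v l1).1; (v l1).2] :&: [set (v l2).1; (v l2).2]| <= 1)%N) ->
  exists ed : 'I_k -> upair p,
    (forall l, edge (v l).1 (v l).2 = Some (ed l)) /\ injective ed.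
Proof.
move=> v_offdiag v_meet.
have [ed v_ed] : exists ed : 'I_k -> upair p, forall l, edge (v l).1 (v l).2 = Some (ed l).
  by apply: (fin_all_exists (fun l => edge_exists (v_offdiag l))).
exists ed; split=> // l1 l2 ed12; case: (eqVneq l1 l2) => // l12.
have := v_meet _ _ l12; have e1 := v_ed l1; rewrite ed12 in e1.
case/orP: (edge_inj e1 (v_ed l2)) => /eqP->; last rewrite [X in _ :&: X]setUC.
all: by rewrite setIid cards2 v_offdiag.
Qed.

Section NoiseLaw.
Variable R : realType.

Lemma eps_weight_ge0 (a b : R) e :
  0 <= a -> 0 <= b -> a + b <= 1 -> 0 <= eps_weight a b e.
Proof. by rewrite /eps_weight => *; case: ifP => _; [|case: ifP => _]; lra. Qed.

Lemma sum_eps_weight (a b : R) : \sum_e eps_weight a b e = 1.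
Proof. by rewrite !big_ord_recr big_ord0 /= /eps_weight /=; ring. Qed.

Lemma Yval_01 p (A : 'I_p -> 'I_p -> bool) w i j :
  Yval R A w i j = 0 \/ Yval R A w i j = 1.
Proof.
rewrite /Yval /Aval; case: eqP => _; first by left.
case: (eps_val _) => [[|[|n]]|n]; case: (A i j);
  rewrite /= ?mulr1 ?mulr0 ?add0r ?addr0; by [left | right].
Qed.

Lemma phi_norm_le1 k (tau : 'I_k -> bool) (a b : R) l y :
  0 <= a -> 0 <= b -> a + b <= 1 -> y = 0 \/ y = 1 -> `|phi tau a b l y| <= 1.
Proof.
move=> a_ge0 b_ge0 ab_le1 y01; rewrite /phi; case: (tau l); case: y01 => -> /=;
  by rewrite ?expr1 ?expr0 ?mulr1 ?mul1r ler_norml; apply/andP; split; lra.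
Qed.

End NoiseLaw.

Section Estimator.
Variables (R : realType) (a b : R).
Hypotheses (a_ge0 : 0 <= a) (b_ge0 : 0 <= b) (ab_le1 : a + b <= 1).
Variables (p k : nat) (A : 'I_p -> 'I_p -> bool) (tau : 'I_k -> bool).

Local Notation E := (expect (eps_weight a b)).

Let weight_ge0 e : 0 <= eps_weight a b e.
Proof. exact: eps_weight_ge0. Qed.

Let weight_sum : \sum_e eps_weight a b e = 1 := sum_eps_weight a b.

Definition Y_of_eps (i j : 'I_p) (e : 'I_3) : R :=
  Aval R A i j * (eps_val e == 0%Z)%:R + (eps_val e == 1%Z)%:R.

Lemma Yval_edge w i j u :
  i != j -> edge i j = Some u -> Yval R A w i j = Y_of_eps i j (w u).
Proof. by move=> ij /(eps_of_edge w) ij_u; rewrite /Yval (negbTE ij) ij_u. Qed.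

Lemma mean_phi_Y_of_eps l i j :
  \sum_e eps_weight a b e * phi tau a b l (Y_of_eps i j e) =
  (1 - a - b) * (Aval R A i j ^+ tau l * (1 - Aval R A i j) ^+ (1 - tau l)).
Proof.
rewrite !big_ord_recr big_ord0 /= /eps_weight /Y_of_eps /phi /=.
by case: (tau l) => /=; ring.
Qed.

Definition phi_prod (v : tup p k) (w : noise p) : R :=
  \prod_l phi tau a b l (Yval R A w (v l).1 (v l).2).

Definition pattern_ind (v : tup p k) : R :=
  \prod_l (Aval R A (v l).1 (v l).2 ^+ tau l * (1 - Aval R A (v l).1 (v l).2) ^+ (1 - tau l)).

Lemma phi_prod_norm_le1 v w : `|phi_prod v w| <= 1.
Proof.
rewrite /phi_prod normr_prod; apply: prodr_ile1 => l _.
by rewrite normr_ge0 (phi_norm_le1 _ _ a_ge0 b_ge0 ab_le1 (Yval_01 R A w _ _)).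
Qed.

Definition phi_on_eps (v : tup p k) (l : 'I_k) (e : 'I_3) : R :=
  phi tau a b l (Y_of_eps (v l).1 (v l).2 e).

Variable V : {set tup p k}.
Hypothesis admV : admissible V.

Lemma phi_prod_edge_map v : v \in V ->
  exists ed : 'I_k -> upair p, [/\ injective ed,
    forall l, edge (v l).1 (v l).2 = Some (ed l) &
    forall w, phi_prod v w = \prod_l phi_on_eps v l (w (ed l))].
Proof.
move=> vV; have [_ /(_ v vV)[v_offdiag v_meet]] := admV.
have [ed [v_ed ed_inj]] := edge_map_exists v_offdiag v_meet.
exists ed; split=> // w; apply: eq_bigr => l _.
by rewrite (Yval_edge _ (v_offdiag l) (v_ed l)).
Qed.

Lemma expect_phi_prod v : v \in V -> E (phi_prod v) = (1 - a - b) ^+ k * pattern_ind v.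
Proof.
case/phi_prod_edge_map => ed [ed_inj _ prodE].
rewrite (eq_expect prodE) (expect_prod weight_sum _ ed_inj).
under eq_bigr do rewrite mean_phi_Y_of_eps.
by rewrite big_split /= prodr_const card_ord.
Qed.

Lemma expect_phi_prodM v v' : v \in V -> v' \in V -> ~~ share v v' ->
  E (fun w => phi_prod v w * phi_prod v' w) = E (phi_prod v) * E (phi_prod v').
Proof.
case/phi_prod_edge_map => ed [ed_inj v_ed prodE].
case/phi_prod_edge_map => ed' [ed'_inj v'_ed prod'E] no_share.
pose both (x : 'I_k + 'I_k) := match x with inl l => ed l | inr l => ed' l end.
have both_inj : injective both.
  have disjoint l l' : ed l <> ed' l'.
    move=> edl; case/negP: no_share; apply/existsP; exists l; apply/existsP; exists l'.
    by apply: (edge_inj (v_ed l)); rewrite edl.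
  by case=> [l1|l1] [l2|l2] //= => [/ed_inj-> | /disjoint | /esym/disjoint | /ed'_inj->].
pose F (x : 'I_k + 'I_k) := match x with inl l => phi_on_eps v l | inr l => phi_on_eps v' l end.
transitivity (E (fun w => \prod_x F x (w (both x)))).
  by apply: eq_expect => w; rewrite big_sumType prodE prod'E.
rewrite (expect_prod weight_sum F both_inj) big_sumType.
rewrite (eq_expect prodE) (eq_expect prod'E).
by rewrite (expect_prod weight_sum _ ed_inj) (expect_prod weight_sum _ ed'_inj).
Qed.

Lemma cov_phi_prod_le v v' : v \in V -> v' \in V ->
  E (fun w => (phi_prod v w - E (phi_prod v)) * (phi_prod v' w - E (phi_prod v')))
  <= 2 * (share v v')%:R.
Proof.
move=> vV v'V; rewrite (expect_cov weight_sum).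
have [shared | /(expect_phi_prodM vV v'V)->] := boolP (share v v'); last by rewrite mulr0; lra.
have E_le1 f : (forall w, `|f w| <= 1) -> `|E f| <= 1.
  exact: (expect_norm_le1 weight_ge0 weight_sum).
have /E_le1 := phi_prod_norm_le1 v; have /E_le1 := phi_prod_norm_le1 v'.
have /E_le1 : forall w, `|phi_prod v w * phi_prod v' w| <= 1.
  by move=> w; rewrite normrM mulr_ile1 ?normr_ge0 ?phi_prod_norm_le1.
rewrite !ler_norml mulr1 => /andP[? ?] /andP[? ?] /andP[? ?]; nra.
Qed.

Lemma expect_sq_sum_le : (1 < k)%N ->
  E (fun w => (\sum_(v in V) (phi_prod v w - E (phi_prod v))) ^+ 2)
  <= (4 * k ^ 2 * aleph V * #|V|)%:R.
Proof.
move=> k_gt1.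
rewrite (eq_expect (g := fun w => \sum_(v in V) \sum_(v' in V)
  (phi_prod v w - E (phi_prod v)) * (phi_prod v' w - E (phi_prod v')))); last first.
  by move=> w; rewrite expr2 mulr_suml; apply: eq_bigr => v _; rewrite mulr_sumr.
rewrite expect_sum.
apply: le_trans (_ : \sum_(v in V) (4 * k ^ 2 * aleph V)%:R <= _); last first.
  by rewrite sumr_const [in X in _ <= X]natrM mulr_natr.
apply: ler_sum => v vV; rewrite expect_sum.
apply: le_trans (_ : \sum_(v' in V) 2 * (share v v')%:R <= _).
  by apply: ler_sum => v' v'V; apply: cov_phi_prod_le.
rewrite -mulr_sumr -natr_sum -natrM ler_nat.
by have := sum_share_le V v k_gt1; lia.
Qed.

Lemma card_V_gt0 : (0 < #|V|)%N.
Proof. by rewrite card_gt0; case: admV. Qed.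

Lemma Ctilde_sub_C_V w : a + b < 1 ->
  Ctilde tau a b A V w - C_V R tau A V =
  ((1 - a - b) ^+ k * #|V|%:R)^-1 * \sum_(v in V) (phi_prod v w - E (phi_prod v)).
Proof.
move=> ab_lt1; have d_gt0 : 0 < 1 - a - b by lra.
have V_gt0 : 0 < #|V|%:R :> R by rewrite ltr0n card_V_gt0.
rewrite sumrB [X in _ * (_ - X)](eq_bigr _ expect_phi_prod) -mulr_sumr.
rewrite /Ctilde /C_V /phi_prod /pattern_ind; field.
by rewrite gt_eqF // expf_neq0 // gt_eqF.
Qed.

Lemma prob_Ctilde_dev_le (t : R) : 0 < t -> a + b < 1 -> (1 < k)%N ->
  Prob a b (fun w => t < `|Ctilde tau a b A V w - C_V R tau A V|)
  <= (4 * k ^ 2 * aleph V)%:R / (((1 - a - b) ^+ k) ^+ 2 * #|V|%:R * t ^+ 2).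
Proof.
move=> t_gt0 ab_lt1 k_gt1.
have d_gt0 : 0 < (1 - a - b) ^+ k by rewrite exprn_gt0 //; lra.
have V_gt0 : 0 < #|V|%:R :> R by rewrite ltr0n card_V_gt0.
apply: le_trans (chebyshev weight_ge0 _ t_gt0) _.
set coef := ((1 - a - b) ^+ k * #|V|%:R)^-1.
rewrite (eq_expect (g := fun w =>
  coef ^+ 2 * (\sum_(v in V) (phi_prod v w - E (phi_prod v))) ^+ 2)); last first.
  by move=> w; rewrite Ctilde_sub_C_V // exprMn.
rewrite expectZ ler_pdivrMr ?exprn_gt0 //.
have -> : (4 * k ^ 2 * aleph V)%:R / ((1 - a - b) ^+ k ^+ 2 * #|V|%:R * t ^+ 2) * t ^+ 2
          = coef ^+ 2 * (4 * k ^ 2 * aleph V * #|V|)%:R.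
  by rewrite /coef [in RHS]natrM; field; rewrite !gt_eqF.
by rewrite ler_wpM2l ?sqr_ge0 ?expect_sq_sum_le.
Qed.

Lemma prob_Ctilde_dev_rate_le (M : R) : 0 < M -> a + b < 1 -> (1 < k)%N ->
  Prob a b (fun w =>
    M * Num.sqrt ((aleph V)%:R / #|V|%:R) < `|Ctilde tau a b A V w - C_V R tau A V|)
  <= (4 * k ^ 2)%:R / (((1 - a - b) ^+ k) ^+ 2 * M ^+ 2).
Proof.
move=> M_gt0 ab_lt1 k_gt1.
have aleph_gt0 : 0 < (aleph V)%:R :> R.
  by rewrite ltr0n aleph_ge1 //; case: admV.
have V_gt0 : 0 < #|V|%:R :> R by rewrite ltr0n card_V_gt0.
have d_gt0 : 0 < (1 - a - b) ^+ k by rewrite exprn_gt0 //; lra.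
have rate_gt0 : 0 < Num.sqrt ((aleph V)%:R / #|V|%:R : R) by rewrite sqrtr_gt0 divr_gt0.
apply: le_trans (prob_Ctilde_dev_le (mulr_gt0 M_gt0 rate_gt0) ab_lt1 k_gt1) _.
rewrite exprMn sqr_sqrtr ?divr_ge0 ?ler0n // natrM le_eqVlt; apply/orP; left.
by apply/eqP; field; rewrite !gt_eqF.
Qed.

End Estimator.

Theorem proposition2 (R : realType) (k : nat) (tau : 'I_k -> bool)
    (A : forall p : nat, 'I_p -> 'I_p -> bool)
    (V : forall p : nat, {set tup p k})
    (alpha beta : nat -> R) (c : R) (p0 : nat) :
  (2 <= k)%N ->
  0 < c ->
  (forall p, (p0 <= p)%N ->
     (forall i j : 'I_p, A p i j = A p j i) /\
     (forall i : 'I_p, A p i i = false) /\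
     admissible (V p) /\
     0 <= alpha p /\ 0 <= beta p /\ alpha p + beta p <= 1 /\
     c <= `|1 - alpha p - beta p|) ->
  forall eps : R, 0 < eps ->
  exists M : R, 0 < M /\
  exists P0 : nat, forall p, (P0 <= p)%N ->
    Prob (alpha p) (beta p)
      (fun w : noise p =>
         M * Num.sqrt ((aleph (V p))%:R / (#|V p|)%:R)
           < `|Ctilde tau (alpha p) (beta p) (A p) (V p) w - C_V R tau (A p) (V p)|)
    <= eps.
Proof.
move=> k_gt1 c_gt0 model eps eps_gt0.
pose C : R := (c ^+ k) ^+ 2.
have C_gt0 : 0 < C by rewrite !exprn_gt0.
(* M is chosen so that 4 k^2 / (C M^2) <= eps. *)
pose X : R := (4 * k ^ 2)%:R / (C * eps).
have X_ge0 : 0 <= X by rewrite divr_ge0 // mulr_ge0 ?ltW.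
pose M : R := X + 1.
have M_gt0 : 0 < M by rewrite /M; lra.
have M2_ge : (4 * k ^ 2)%:R <= C * eps * M ^+ 2.
  have -> : (4 * k ^ 2)%:R = C * eps * X by rewrite /X; field; rewrite !gt_eqF.
  by rewrite ler_pM2l ?(mulr_gt0 C_gt0 eps_gt0) // /M; nra.
exists M; split=> //; exists p0 => p /model[_ [_ [admV [a_ge0 [b_ge0 [ab_le1 c_le]]]]]].
have d_gt0 : 0 < 1 - alpha p - beta p by rewrite ger0_norm in c_le; lra.
rewrite gtr0_norm // in c_le.
apply: le_trans (prob_Ctilde_dev_rate_le a_ge0 b_ge0 ab_le1 (A p) tau admV M_gt0 _ k_gt1) _.
  lra.
have C_le : C <= ((1 - alpha p - beta p) ^+ k) ^+ 2.
  have k_gt0 : (0 < k)%N by lia.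
  by rewrite /C !ler_pXn2r ?nnegrE ?exprn_ge0 // ltW.
rewrite ler_pdivrMr ?mulr_gt0 ?exprn_gt0 //; apply: le_trans M2_ge _.
by rewrite mulrAC [leLHS]mulrC ler_pM2l // ler_pM2r ?exprn_gt0.
Qed.
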